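(* Let $\mathcal{X}$ be a real Hilbert space, let $\mathbb{A},\mathbb{B},\mathbb{C}:\mathcal{X}\to 2^{\mathcal{X}}$ be maximal monotone operators with $\mathbb{C}$ $\beta$-cocoercive for some $\beta>0$ (so $\mathbb{C}$ is single-valued), let $\gamma>0$, and define $$T=\mathbb{J}_{\gamma\mathbb{C}}\circ\big(\mathbb{J}_{\gamma \mathbb{A}}\circ(2\mathbb{J}_{\gamma \mathbb{B}}-I-\gamma \mathbb{C}\mathbb{J}_{\gamma \mathbb{B}})+\gamma \mathbb{C}\mathbb{J}_{\gamma \mathbb{B}}\big)+ (I-\mathbb{J}_{\gamma \mathbb{B}}).$$ Then $$\operatorname{zer}(\mathbb{A}+\mathbb{B}+\mathbb{C})=\mathbb{J}_{\gamma\mathbb{B}}(\operatorname{Fix}T),$$ where $\operatorname{Fix}T=\{x+\gamma u\;:\;0\in(\mathbb{A}+\mathbb{B}+\mathbb{C})x,\ u\in(\mathbb{B}x)\cap(-\mathbb{A}x-\mathbb{C}x)\}$.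
   Context: For a monotone operator $M$, $\mathbb{J}_{M}=(I+M)^{-1}$ is its resolvent ($I$ the identity on $\mathcal{X}$). $\operatorname{zer}(M)=\{x: 0\in Mx\}$. $\operatorname{Fix}T=\{z: Tz=z\}$ is the fixed-point set of $T$. An operator $\mathbb{C}$ is $\beta$-cocoercive if $\langle u-v,x-y\rangle\ge\beta\|u-v\|^2$ for all $x,y$, $u\in\mathbb{C}x$, $v\in\mathbb{C}y$. *)

From HB Require Import structures.
From mathcomp Require Import all_boot all_order all_algebra.
From mathcomp Require Import all_classical all_reals all_analysis.
Set Implicit Arguments. Unset Strict Implicit. Unset Printing Implicit Defensive.
Import Order.TTheory GRing.Theory Num.Theory.
Import numFieldNormedType.Exports.
Local Open Scope classical_set_scope.
Local Open Scope ring_scope.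

(* A real Hilbert space is modelled as a complete normed space X over a
   realType R together with an inner product ip inducing the norm. *)
Definition inner_product (R : realType) (X : completeNormedModType R)
  (ip : X -> X -> R) : Prop :=
  [/\ (forall x y, ip x y = ip y x),
      (forall a x y z, ip (a *: x + y) z = a * ip x z + ip y z) &
      (forall x, ip x x = `|x| ^+ 2)].

Section Ops.
Context {R : realType} {X : completeNormedModType R}.

Definition op_id : X -> set X := fun x => [set x].
Definition op_add (M N : X -> set X) : X -> set X :=
  fun x => [set w | exists u v, M x u /\ N x v /\ w = u + v].
Definition op_scale (a : R) (M : X -> set X) : X -> set X :=
  fun x => [set w | exists u, M x u /\ w = a *: u].
Definition op_sub (M N : X -> set X) : X -> set X := op_add M (op_scale (-1) N).
Definition op_comp (M N : X -> set X) : X -> set X :=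
  fun x => [set w | exists y, N x y /\ M y w].
Definition op_inv (M : X -> set X) : X -> set X := fun y => [set x | M x y].
Definition resolvent (M : X -> set X) : X -> set X := op_inv (op_add op_id M).
Definition zer (M : X -> set X) : set X := [set x | M x 0].
Definition Fix (T : X -> set X) : set X := [set z | T z z].
Definition op_image (M : X -> set X) (S : set X) : set X :=
  [set x | exists z, S z /\ M z x].

Definition monotone (ip : X -> X -> R) (M : X -> set X) : Prop :=
  forall x y u v, M x u -> M y v -> 0 <= ip (u - v) (x - y).
Definition maximal_monotone (ip : X -> X -> R) (M : X -> set X) : Prop :=
  monotone ip M /\
  forall M' : X -> set X, monotone ip M' -> (forall x, M x `<=` M' x) ->
    forall x, M' x `<=` M x.
Definition cocoercive (ip : X -> X -> R) (beta : R) (M : X -> set X) : Prop :=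
  forall x y u v, M x u -> M y v -> beta * `|u - v| ^+ 2 <= ip (u - v) (x - y).
End Ops.

From Pilot Require Import Defs.
From HB Require Import structures.
From mathcomp Require Import all_boot all_order all_algebra.
From mathcomp Require Import all_classical all_reals all_analysis.
Import Order.TTheory GRing.Theory Num.Theory.
Import numFieldNormedType.Exports.
Local Open Scope classical_set_scope.
Local Open Scope ring_scope.
Set Implicit Arguments. Unset Strict Implicit.

(* Write a point as z = x + gamma b with b in B x. Monotonicity of B gives
   J_{gamma B} z = {x}, and cocoercivity makes C single-valued, C x = {c}, so
   every piece of T at z other than J_{gamma A} and J_{gamma C} evaluates, and
   z in T z reduces to
     x in J_{gamma C}(J_{gamma A}(x - gamma b - gamma c) + gamma c).
   Single-valuedness of C turns this into x in J_{gamma A}(x - gamma b - gamma c),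
   i.e. a + b + c = 0 for some a in A x. *)

Lemma scale2_subD_eq (F : fieldType) (V : lmodType F) (g : F) (x a b c : V) :
  g != 0 -> (2 *: x - (x + g *: b) - g *: c = x + g *: a) <-> a + b + c = 0.
Proof.
move=> g_neq0.
have -> : 2 *: x - (x + g *: b) - g *: c = x + g *: a - g *: (a + b + c).
  rewrite scaler_nat mulr2n !scalerDr !opprD !addrA addrK.
  by rewrite addrAC [RHS]addrAC addrK.
split=> [|->]; last by rewrite scaler0 subr0.
rewrite -[RHS]addr0 => /addrI /eqP; rewrite oppr_eq0 scaler_eq0 (negbTE g_neq0).
by move/eqP.
Qed.

Section PointwiseCalculus.
Context {R : realType} {X : completeNormedModType R}.
Implicit Types (M N : X -> set X) (g k : R) (x y z m n : X).

Lemma op_scale_set1 k M x m : M x = [set m] -> op_scale k M x = [set k *: m].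
Proof.
move=> Mx; apply/seteqP; split=> w; first by case=> u [+ ->]; rewrite Mx => ->.
by move=> ->; exists m; rewrite Mx.
Qed.

Lemma op_add_set1r M N x n : N x = [set n] -> op_add M N x = (+%R^~ n) @` M x.
Proof.
move=> Nx; apply/seteqP; split=> w.
- by case=> u [v [Mu [+ ->]]]; rewrite Nx => ->; exists u.
- by case=> u Mu <-; exists u, n; rewrite Nx.
Qed.

Lemma op_add_set1 M N x m n :
  M x = [set m] -> N x = [set n] -> op_add M N x = [set m + n].
Proof. by move=> Mx /op_add_set1r ->; rewrite Mx image_set1. Qed.

Lemma op_sub_set1 M N x m n :
  M x = [set m] -> N x = [set n] -> op_sub M N x = [set m - n].
Proof.
move=> Mx /(op_scale_set1 (-1)) Nx.
by rewrite /op_sub (op_add_set1 Mx Nx) scaleN1r.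
Qed.

Lemma op_comp_set1r M N x y : N x = [set y] -> op_comp M N x = M y.
Proof.
move=> Nx; apply/seteqP; split=> w; first by case=> y' []; rewrite Nx => ->.
by move=> Myw; exists y; rewrite Nx.
Qed.

Lemma resolvent_scaleP M g z x :
  resolvent (op_scale g M) z x <-> exists2 b, M x b & z = x + g *: b.
Proof.
split; first by case=> _ [_ [-> [[b [Mb ->]] ->]]]; exists b.
by case=> b Mb ->; exists x, (g *: b); split=> //; split=> //; exists b.
Qed.

Lemma zer_add3P A B C x :
  zer (op_add (op_add A B) C) x <->
  exists a b c, [/\ A x a, B x b, C x c & a + b + c = 0].
Proof.
split.
  by case=> ? [c [[a [b [Axa [Bxb ->]]]] [Cxc /esym sum0]]]; exists a, b, c.
case=> a [b [c [Axa Bxb Cxc sum0]]].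
by exists (a + b), c; split; [exists a, b | ].
Qed.

Lemma op_sub_oppP A C x u :
  op_sub (op_scale (-1) A) C x u <->
  exists a c, [/\ A x a, C x c & a + u + c = 0].
Proof.
split.
  case=> ? [? [[a [Axa ->]] [[c [Cxc ->]] ->]]]; exists a, c; split=> //.
  by rewrite !scaleN1r addrA subrr add0r addNr.
case=> a [c [Axa Cxc sum0]]; exists (-1 *: a), (-1 *: c).
split; first by exists a.
split; first by exists c.
apply/eqP; move: sum0; rewrite !scaleN1r -opprD -addrA addrCA => /eqP.
by rewrite addr_eq0.
Qed.

End PointwiseCalculus.

Section InnerProduct.
Context {R : realType} {X : completeNormedModType R} (ip : X -> X -> R).
Hypothesis ip_inner : inner_product ip.

Lemma ip0l z : ip 0 z = 0.
Proof.
case: ip_inner => _ ipDl _; apply: (addrI (ip 0 z)).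
by have := ipDl 1 0 0 z; rewrite scaler0 addr0 mul1r addr0 => <-.
Qed.

Lemma ipZl a x z : ip (a *: x) z = a * ip x z.
Proof. by case: ip_inner => _ ipDl _; rewrite -[_ *: x]addr0 ipDl ip0l addr0. Qed.

Lemma ipZr a x z : ip x (a *: z) = a * ip x z.
Proof. by case: ip_inner => ipC _ _; rewrite ipC ipZl ipC. Qed.

Lemma ip0r z : ip z 0 = 0.
Proof. by case: ip_inner => ipC _ _; rewrite ipC ip0l. Qed.

Lemma sqr_norm_le0 (v : X) : `|v| ^+ 2 <= 0 -> v = 0.
Proof.
by move=> le0; apply/normr0_eq0/eqP; rewrite -sqrf_eq0 eq_le le0 exprn_ge0.
Qed.

Lemma monotone_resolvent_set1 (M : X -> set X) g x b :
  Defs.monotone ip M -> 0 < g -> M x b ->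
  resolvent (op_scale g M) (x + g *: b) = [set x].
Proof.
move=> monoM g_gt0 Mxb; apply/seteqP; split=> y; last first.
  by move->; apply/resolvent_scaleP; exists b.
case/resolvent_scaleP=> b' Myb' Exy.
have Dxy : x - y = - g *: (b - b').
  apply/eqP; rewrite scaleNr -scalerN opprB scalerBr subr_eq.
  by rewrite addrC addrA -Exy addrK.
suff eq_b : b' = b by move: Exy; rewrite eq_b => /addIr.
apply/eqP; rewrite eq_sym -subr_eq0; apply/eqP/sqr_norm_le0.
case: ip_inner (monoM _ _ _ _ Mxb Myb') => _ _ ipxx.
by rewrite Dxy ipZr ipxx mulNr oppr_ge0 pmulr_rle0.
Qed.

Lemma cocoercive_set1 (C : X -> set X) beta x c :
  0 < beta -> cocoercive ip beta C -> C x c -> C x = [set c].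
Proof.
move=> beta_gt0 cocoC Cxc; apply/seteqP; split=> [c' Cxc'|_ ->//].
apply/eqP; rewrite -subr_eq0; apply/eqP/sqr_norm_le0.
by have := cocoC _ _ _ _ Cxc' Cxc; rewrite subrr ip0r pmulr_rle0.
Qed.

End InnerProduct.

Section SplittingOperator.
Context {R : realType} {X : completeNormedModType R}.
Variables (A B C : X -> set X) (gamma : R).

Let J (M : X -> set X) := resolvent (op_scale gamma M).
Let gCJB := op_scale gamma (op_comp C (J B)).
Let S := op_sub (op_sub (op_scale 2 (J B)) op_id) gCJB.

Definition splitting_operator : X -> set X :=
  op_add (op_comp (J C) (op_add (op_comp (J A) S) gCJB)) (op_sub op_id (J B)).

Lemma splitting_operator_dom z w : splitting_operator z w ->
  exists x b c, [/\ B x b, C x c & z = x + gamma *: b].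
Proof.
case=> _ [_ [[_ [[_ [_ [_ [[c [[x [JBzx Cxc]] _]] _]]]] _]] _]].
by case/resolvent_scaleP: JBzx => b Bxb ->; exists x, b, c.
Qed.

Variables (ip : X -> X -> R) (beta : R).
Hypotheses (ip_inner : inner_product ip) (monoB : Defs.monotone ip B)
  (beta_gt0 : 0 < beta) (cocoC : cocoercive ip beta C) (gamma_gt0 : 0 < gamma).

Lemma splitting_operator_fixP x b c : B x b -> C x c ->
  splitting_operator (x + gamma *: b) (x + gamma *: b) <->
  exists2 a, A x a & a + b + c = 0.
Proof.
move=> Bxb Cxc; set z := x + gamma *: b.
have JBz : J B z = [set x] :=
  monotone_resolvent_set1 ip_inner monoB gamma_gt0 Bxb.
have Cx : C x = [set c] := cocoercive_set1 ip_inner beta_gt0 cocoC Cxc.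
have gCJBz : gCJB z = [set gamma *: c].
  by apply: op_scale_set1; rewrite (op_comp_set1r _ JBz).
have Sz : S z = [set 2 *: x - z - gamma *: c].
  exact: op_sub_set1 (op_sub_set1 (op_scale_set1 2 JBz) erefl) gCJBz.
have gamma_neq0 : gamma != 0 by rewrite gt_eqF.
rewrite /splitting_operator (op_add_set1r _ (op_sub_set1 erefl JBz)).
split.
- case=> p [y [Qzy JCyp]]; rewrite -[in RHS](subrKC x z) => /addIr Epx.
  move: Qzy JCyp; rewrite Epx (op_add_set1r _ gCJBz) => -[u JAu <-].
  case/resolvent_scaleP=> c'; rewrite Cx => -> /addIr Eux.
  move: JAu; rewrite (op_comp_set1r _ Sz) Eux => /resolvent_scaleP[a Axa].
  by move/(scale2_subD_eq _ _ _ _ gamma_neq0); exists a.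
- case=> a Axa sum0; exists x; last by rewrite subrKC.
  exists (x + gamma *: c); split; last by apply/resolvent_scaleP; exists c.
  rewrite (op_add_set1r _ gCJBz); exists x => //.
  rewrite (op_comp_set1r _ Sz); apply/resolvent_scaleP; exists a => //.
  exact/(scale2_subD_eq _ _ _ _ gamma_neq0).
Qed.

Lemma Fix_splitting_operatorE :
  Fix splitting_operator = [set z | exists x u, z = x + gamma *: u /\
    zer (op_add (op_add A B) C) x /\ B x u /\ op_sub (op_scale (-1) A) C x u].
Proof.
apply/seteqP; split=> z.
- move=> Tzz; have [x [b [c [Bxb Cxc Ez]]]] := splitting_operator_dom Tzz.
  move: Tzz; rewrite /Fix /= Ez => /(splitting_operator_fixP Bxb Cxc)[a Axa sum0].
  exists x, b; split=> //; split; first by apply/zer_add3P; exists a, b, c.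
  by split=> //; apply/op_sub_oppP; exists a, c.
- case=> x [u [-> [_ [Bxu /op_sub_oppP[a [c [Axa Cxc sum0]]]]]]].
  by apply/(splitting_operator_fixP Bxu Cxc); exists a.
Qed.

Lemma zer_eq_resolvent_image_Fix :
  zer (op_add (op_add A B) C) = op_image (J B) (Fix splitting_operator).
Proof.
rewrite Fix_splitting_operatorE; apply/seteqP; split=> x.
- move=> zer_x; case/zer_add3P: (zer_x) => a [b [c [Axa Bxb Cxc sum0]]].
  exists (x + gamma *: b); split; last by apply/resolvent_scaleP; exists b.
  exists x, b; split=> //; split=> //; split=> //.
  by apply/op_sub_oppP; exists a, c.
- case=> _ [[y [u [-> [zer_y [Byu _]]]]]].
  by rewrite /J (monotone_resolvent_set1 ip_inner monoB gamma_gt0 Byu) => ->.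
Qed.

End SplittingOperator.

Theorem lemma2 (R : realType) (X : completeNormedModType R) (ip : X -> X -> R)
  (Hip : inner_product ip) (A B C : X -> set X) (beta gamma : R)
  (hA : maximal_monotone ip A) (hB : maximal_monotone ip B)
  (hC : maximal_monotone ip C) (hbeta : 0 < beta) (hCc : cocoercive ip beta C)
  (hgamma : 0 < gamma) :
  let JA := resolvent (op_scale gamma A) in
  let JB := resolvent (op_scale gamma B) in
  let JC := resolvent (op_scale gamma C) in
  let gCJB := op_scale gamma (op_comp C JB) in
  let T := op_add
             (op_comp JC (op_add
                (op_comp JA (op_sub (op_sub (op_scale 2 JB) op_id) gCJB))
                gCJB))
             (op_sub op_id JB) in
  zer (op_add (op_add A B) C) = op_image JB (Fix T) /\
  Fix T = [set z | exists x u, z = x + gamma *: u /\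
                     zer (op_add (op_add A B) C) x /\
                     B x u /\ op_sub (op_scale (-1) A) C x u].
Proof.
move=> JA JB JC gCJB T.
(* folding T first keeps the conversion checks below fast *)
have -> : T = splitting_operator A B C gamma by [].
have monoB := proj1 hB.
split; first exact: (zer_eq_resolvent_image_Fix A Hip monoB hbeta hCc hgamma).
exact: (Fix_splitting_operatorE A Hip monoB hbeta hCc hgamma).
Qed.
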